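(* For every integer $n\ge0$, $$\mathcal{B}_{n,1}=\sum_{k=0}^{n}\binom{n}{k}\frac{\phi_{k+1}B_{n-k}}{k+1}.$$
   Context: $\phi_m$ denotes the $m$-th Bell number (number of set partitions of an $m$-set). $B_m$ denotes the $m$-th Bernoulli number, defined by $\sum_{m\ge0}B_m\frac{z^m}{m!}=\frac{z}{e^z-1}$. The $1$-Bell numbers $\mathcal{B}_{n,1}$ are defined by $\sum_{n\ge0}\mathcal{B}_{n,1}\frac{z^n}{n!}=\sum_{n\ge0}\frac{(e^z-1)^n}{(n+1)!}=\frac{\exp(e^z-1)-1}{e^z-1}$. *)

From mathcomp Require Import all_boot all_order all_algebra.
Set Implicit Arguments. Unset Strict Implicit. Unset Printing Implicit Defensive.
Import Order.TTheory GRing.Theory Num.Theory.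
Local Open Scope ring_scope.

Definition bell (m : nat) : nat :=
  #|[set P : {set {set 'I_m}} | partition P [set: 'I_m]]|.

Definition fps := nat -> rat.
Definition fps_mul (a b : fps) : fps :=
  fun n => \sum_(k < n.+1) a k * b (n - k)%N.
Definition fps_pow (a : fps) (j : nat) : fps :=
  iter j (fps_mul a) (fun n => if n == 0%N then 1 else 0).
Definition fps_X : fps := fun n => if n == 1%N then 1 else 0.
Definition fps_expm1 : fps := fun n => if n == 0%N then 0 else (n`!%:R)^-1.
Definition egf (u : nat -> rat) : fps := fun m => u m / (m`!)%:R.

(* 1-Bell numbers: B_{n,1} = n! [z^n] sum_{j>=0} (e^z-1)^j/(j+1)!.
   Since e^z-1 has zero constant term, only j <= n contribute to [z^n]. *)
Definition bell1 (n : nat) : rat :=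
  (n`!)%:R * \sum_(j < n.+1) fps_pow fps_expm1 j n / ((j.+1)`!)%:R.

(* B is the Bernoulli sequence: sum_m B_m z^m/m! = z/(e^z-1),
   i.e. (e^z - 1) * (sum_m B_m z^m/m!) = z as formal power series
   (this determines B uniquely since e^z-1 = z + O(z^2)). *)
Definition is_bernoulli (B : nat -> rat) : Prop :=
  forall n, fps_mul fps_expm1 (egf B) n = fps_X n.

(* Write E = e^z - 1, Q = exp E and F = sum_j E^j/(j+1)!, so that
   B_{n,1} = n! [z^n] F and E F = Q - 1.  The defining property E * B(z) = z
   of the Bernoulli series B(z) gives E * ((Q - 1)/z * B(z)) = Q - 1 too, and
   E = z + O(z^2) can be cancelled: F = (Q - 1)/z * B(z).  Taking [z^n]
   yields the theorem, since phi_m = m! [z^m] Q: both sides satisfy the Bell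
   recurrence phi_{m+1} = sum_k C(m,k) phi_{m-k}, combinatorially by removing
   the block containing a fixed point, analytically because Q' = e^z Q.
   The ring laws of coefficient sequences are inherited from {poly rat}, as
   coefficients of a product up to n only involve coefficients up to n. *)

From mathcomp Require Import all_boot all_order all_algebra.
From mathcomp Require Import zify ring.
Set Implicit Arguments. Unset Strict Implicit. Unset Printing Implicit Defensive.
Import GRing.Theory Num.Theory.
Local Open Scope ring_scope.

Definition fps_agree (n : nat) (a : fps) (p : {poly rat}) : Prop :=
  forall k, (k <= n)%N -> a k = p`_k.

Lemma fps_agree_poly n a : fps_agree n a (\poly_(i < n.+1) a i).
Proof. by move=> k kn; rewrite coef_poly ltnS kn. Qed.

Lemma fps_agreeW m n a p : (m <= n)%N -> fps_agree n a p -> fps_agree m a p.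
Proof. by move=> mn ap k km; apply: ap; apply: leq_trans mn. Qed.

Lemma fps_agree_mul n a b p q :
  fps_agree n a p -> fps_agree n b q -> fps_agree n (fps_mul a b) (p * q).
Proof.
move=> ap bq k kn; rewrite /fps_mul coefM; apply: eq_bigr => -[i /= ik].
rewrite ap ?bq //; lia.
Qed.

Lemma fps_agree_pow n a p j : fps_agree n a p -> fps_agree n (fps_pow a j) (p ^+ j).
Proof.
move=> ap; elim: j => [|j IH] k kn.
  by rewrite expr0 coef1; case: k {kn}.
rewrite exprS; exact: (fps_agree_mul ap IH).
Qed.

Lemma fps_mulCA a b c : fps_mul a (fps_mul b c) =1 fps_mul b (fps_mul a c).
Proof.
move=> n; have ha := @fps_agree_poly n a; have hb := @fps_agree_poly n b.
have hc := @fps_agree_poly n c.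
rewrite (fps_agree_mul ha (fps_agree_mul hb hc)) //.
by rewrite (fps_agree_mul hb (fps_agree_mul ha hc)) // mulrCA.
Qed.

Lemma fps_mulX a n : fps_mul a fps_X n = if n is k.+1 then a k else 0.
Proof.
have hX : fps_agree n fps_X 'X by move=> [|[|k]] _; rewrite coefX.
rewrite (fps_agree_mul (@fps_agree_poly n a) hX) // coefMX.
by case: n {hX} => [|k] //=; rewrite coef_poly leqnSn.
Qed.

Lemma eq_fps_mulr a b c n :
  (forall k, (k <= n)%N -> b k = c k) -> fps_mul a b n = fps_mul a c n.
Proof. by move=> bc; apply: eq_bigr => -[k /= kn]; rewrite bc ?leq_subr. Qed.

Lemma fps_mul_sumr (I : Type) (r : seq I) a (c : I -> rat) (b : I -> fps) n :
  fps_mul a (fun k => \sum_(i <- r) b i k * c i) n =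
  \sum_(i <- r) fps_mul a (b i) n * c i.
Proof.
rewrite /fps_mul; under eq_bigr do rewrite mulr_sumr.
rewrite exchange_big /=; apply: eq_bigr => i _; rewrite mulr_suml.
by apply: eq_bigr => k _; rewrite mulrA.
Qed.

Lemma fps_mulI a u v : a 0%N = 0 -> a 1%N != 0 ->
  fps_mul a u =1 fps_mul a v -> u =1 v.
Proof.
move=> a0 a1 eq_auv; elim/ltn_ind => n IH; have := eq_auv n.+1.
rewrite /fps_mul !big_ord_recl !lift0 a0 !mul0r !add0r subn1 /=.
have -> : \sum_(i < n) a i.+2 * u (n.+1 - i.+2)%N =
          \sum_(i < n) a i.+2 * v (n.+1 - i.+2)%N.
  by apply: eq_bigr => -[i /= lt_in] _; rewrite IH //; lia.
by move/addIr/(mulfI a1).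
Qed.

Lemma fps_pow_coef_lt a j k : a 0%N = 0 -> (k < j)%N -> fps_pow a j k = 0.
Proof.
move=> a0; elim: j k => // j IH k kj; rewrite /fps_pow iterS -/(fps_pow a j).
apply: big1 => -[[|i] /= ik] _; first by rewrite a0 mul0r.
by rewrite IH ?mulr0 //; clear IH; lia.
Qed.

Lemma sum_fps_pow_widen a (c : nat -> rat) m M : a 0%N = 0 -> (m < M)%N ->
  \sum_(j < m.+1) fps_pow a j m * c j = \sum_(j < M) fps_pow a j m * c j.
Proof.
move=> a0 mM; rewrite (big_ord_widen _ (fun j => fps_pow a j m * c j) mM).
rewrite big_mkcond; apply: eq_bigr => j _; case: ltnP => // mj.
by rewrite fps_pow_coef_lt ?mul0r.
Qed.

Lemma deriv_exp_partial (R : numFieldType) (p : {poly R}) M :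
  (\sum_(j < M.+1) (j`!)%:R^-1 *: p ^+ j)^`() =
  (\sum_(j < M) (j`!)%:R^-1 *: p ^+ j) * p^`().
Proof.
rewrite big_ord_recl derivD derivZ expr0 derivC scaler0 add0r linear_sum mulr_suml.
apply: eq_bigr => j _; rewrite /= derivZ deriv_exp /= -scaler_nat scalerA.
rewrite -scalerAl add0n (mulrC p^`()); congr (_ *: _).
have -> : bump 0 j = j.+1 by [].
by rewrite factS natrM invfM mulrAC mulVf ?mul1r // pnatr_eq0.
Qed.

Definition exp_expm1 : fps :=
  fun m => \sum_(j < m.+1) fps_pow fps_expm1 j m / (j`!)%:R.

Lemma exp_expm1_0 : exp_expm1 0%N = 1.
Proof. by rewrite /exp_expm1 big_ord1 /= mul1r invr1. Qed.

Lemma exp_expm1_agree n p M : fps_agree n fps_expm1 p -> (n < M)%N ->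
  fps_agree n exp_expm1 (\sum_(j < M) (j`!)%:R^-1 *: p ^+ j).
Proof.
move=> ep nM k kn; rewrite coef_sum /exp_expm1.
rewrite (@sum_fps_pow_widen _ (fun j => (j`!)%:R^-1) k M) //.
  by apply: eq_bigr => j _; rewrite coefZ mulrC (fps_agree_pow j ep).
exact: leq_ltn_trans nM.
Qed.

Lemma coef_deriv_expm1 N k : (k.+1 < N)%N ->
  (\poly_(i < N) fps_expm1 i)^`()`_k = (k`!)%:R^-1.
Proof.
move=> kN; rewrite coef_deriv coef_poly kN.
have -> : fps_expm1 k.+1 = (k.+1`!)%:R^-1 by [].
by rewrite -[LHS]mulr_natr factS natrM invfM mulrAC mulVf ?mul1r // pnatr_eq0.
Qed.

Lemma exp_expm1_rec m :
  m.+1%:R * exp_expm1 m.+1 = \sum_(k < m.+1) exp_expm1 (m - k)%N / (k`!)%:R.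
Proof.
pose e := \poly_(i < m.+2) fps_expm1 i.
have he : fps_agree m.+1 fps_expm1 e by exact: fps_agree_poly.
rewrite (exp_expm1_agree (M := m.+2) he) // mulr_natl -coef_deriv.
rewrite deriv_exp_partial coefMr.
apply: eq_bigr => -[k /= km] _; rewrite coef_deriv_expm1; last by lia.
by rewrite (exp_expm1_agree (M := m.+1) (fps_agreeW (leqnSn m) he)) ?leq_subr.
Qed.

Definition npart (T : finType) (A : {set T}) : nat :=
  #|[set P : {set {set T}} | partition P A]|.

Lemma npart0 (T : finType) : npart (set0 : {set T}) = 1%N.
Proof.
rewrite /npart -(cards1 (set0 : {set {set T}})); congr #|pred_of_set _|.
by apply/setP => P; rewrite !inE partition_set0.
Qed.

Lemma card_partition_block (T : finType) (A B : {set T}) :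
  B != set0 -> B \subset A ->
  #|[set P : {set {set T}} | partition P A & B \in P]| = npart (A :\: B).
Proof.
case/set0Pn=> x xB BA.
have BnotinP P : partition P (A :\: B) -> B \notin P.
  move=> pP; apply/negP => /(partitionS pP)/subsetP/(_ x xB).
  by rewrite inE xB.
have -> : [set P : {set {set T}} | partition P A & B \in P] =
          [set B |: P | P in [set P | partition P (A :\: B)]].
  apply/setP => P; rewrite inE; apply/andP/imsetP => [[pP BP]|[P' pP' ->]].
    by exists (P :\ B); rewrite ?setD1K // inE partitionD1.
  rewrite inE in pP'; split; last exact: setU11.
  rewrite -[A](setID A B) (setIidPr BA); apply: partitionU1 => //.
    by apply/set0Pn; exists x.
  by rewrite disjoint_subset; apply/subsetP => y; rewrite !inE => ->.
rewrite card_in_imset // => P1 P2; rewrite !inE => pP1 pP2 eqP12.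
by rewrite -(setU1K (BnotinP _ pP1)) -(setU1K (BnotinP _ pP2)) eqP12.
Qed.

Lemma partition_memU1 (T : finType) (P : {set {set T}}) (A S : {set T}) x :
  partition P A -> x \in A -> x \notin S -> (x |: S \in P) = (S == pblock P x :\ x).
Proof.
move=> pP xA xS; have xP : x \in cover P by rewrite (cover_partition pP).
apply/idP/eqP => [SP | ->].
  by rewrite (def_pblock (partition_trivIset pP) SP (setU11 x S)) setU1K.
by rewrite setD1K ?mem_pblock // pblock_mem.
Qed.

Lemma npart_rec (T : finType) (A : {set T}) x : x \in A ->
  npart A = \sum_(S in powerset (A :\ x)) npart (A :\: (x |: S)).
Proof.
move=> xA; rewrite {1}/npart -sum1_card.
rewrite (partition_big (fun P => pblock P x :\ x) [in powerset (A :\ x)]) /=.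
  apply: eq_bigr => S; rewrite powersetE => SAx.
  have xS : x \notin S by apply/negP => /(subsetP SAx); rewrite !inE eqxx.
  rewrite -card_partition_block; last 2 first.
  - by apply/set0Pn; exists x; apply: setU11.
  - by rewrite subUset sub1set xA (subset_trans SAx) ?subsetDl.
  rewrite -sum1_card; apply: eq_bigl => P; rewrite !inE.
  by case pP: (partition P A) => //=; rewrite (partition_memU1 pP) // eq_sym.
move=> P; rewrite inE powersetE => pP; apply: setSD.
by rewrite (partitionS pP) ?pblock_mem ?(cover_partition pP).
Qed.

Lemma sum_powerset_card (V : nmodType) (T : finType) (D : {set T}) (F : nat -> V) :
  \sum_(S in powerset D) F #|S| = \sum_(k < #|D|.+1) F k *+ 'C(#|D|, k).
Proof.
rewrite (partition_big (fun S : {set T} => inord #|S| : 'I_#|D|.+1) xpredT) //=.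
apply: eq_bigr => k _; rewrite -cards_draws -sumr_const.
apply: eq_big => [S | S]; rewrite powersetE ?inE.
  case SD: (S \subset D) => //=.
  by rewrite -val_eqE /= inordK // ltnS subset_leq_card.
by case/andP=> SD /eqP <-; rewrite inordK // ltnS subset_leq_card.
Qed.

Lemma natr_npart_bell_rec (R : pzSemiRingType) (f : nat -> R) :
  f 0%N = 1 -> (forall m, f m.+1 = \sum_(k < m.+1) f (m - k)%N *+ 'C(m, k)) ->
  forall (T : finType) (A : {set T}), (npart A)%:R = f #|A|.
Proof.
move=> f0 fS T A; have [m] := ubnP #|A|; elim: m A => // m IH A.
case: (set_0Vmem A) => [-> _|[x xA]]; first by rewrite npart0 cards0 f0.
rewrite (cardsD1 x A) xA ltnS fS => leAm; rewrite (npart_rec xA) natr_sum.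
rewrite -(sum_powerset_card _ (fun k => f (#|A :\ x| - k)%N)).
apply: eq_bigr => S; rewrite powersetE => SAx.
have cardAS : #|A :\: (x |: S)| = (#|A :\ x| - #|S|)%N.
  by rewrite -setDDl cardsD (setIidPr SAx).
by rewrite IH cardAS // (leq_ltn_trans (leq_subr _ _)).
Qed.

Lemma bell_exp_expm1 m : (bell m)%:R = (m`!)%:R * exp_expm1 m.
Proof.
pose f k := (k`!)%:R * exp_expm1 k.
have f0 : f 0%N = 1 by rewrite /f exp_expm1_0 mulr1.
have fS k : f k.+1 = \sum_(i < k.+1) f (k - i)%N *+ 'C(k, i).
  rewrite /f factS natrM -mulrA mulrCA exp_expm1_rec mulr_sumr.
  apply: eq_bigr => -[i /= ik] _; rewrite -mulr_natl.
  rewrite -(bin_fact (ik : (i <= k)%N)) !natrM.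
  by field; rewrite pnatr_eq0 -lt0n fact_gt0.
by rewrite -[m in RHS]card_ord -cardsT -/(f _) -(natr_npart_bell_rec f0 fS).
Qed.

Definition bell1_gf : fps :=
  fun m => \sum_(j < m.+1) fps_pow fps_expm1 j m / ((j.+1)`!)%:R.

Lemma fps_mul_expm1_bell1_gf n :
  fps_mul fps_expm1 bell1_gf n = exp_expm1 n - (n == 0%N)%:R.
Proof.
pose c j := ((j.+1)`!)%:R^-1 : rat.
rewrite (@eq_fps_mulr _ _ (fun k => \sum_(j < n.+1) fps_pow fps_expm1 j k * c j)).
  rewrite fps_mul_sumr /exp_expm1.
  rewrite (@sum_fps_pow_widen _ (fun j => (j`!)%:R^-1) n n.+2) //.
  rewrite [in RHS]big_ord_recl divr1 addrAC.
  have -> : fps_pow fps_expm1 0 n = (n == 0%N)%:R by case: n.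
  by rewrite subrr add0r; apply: eq_bigr => j _; rewrite lift0.
by move=> k kn; rewrite /bell1_gf (@sum_fps_pow_widen _ c k n.+1).
Qed.

Lemma bell1_gf_bernoulli B : is_bernoulli B ->
  bell1_gf =1 fps_mul (fun k => exp_expm1 k.+1) (egf B).
Proof.
move=> HB; apply: (@fps_mulI fps_expm1) => //.
move=> n; rewrite fps_mul_expm1_bell1_gf fps_mulCA (@eq_fps_mulr _ _ fps_X) //.
by rewrite fps_mulX; case: n => [|n] /=; rewrite ?exp_expm1_0 ?subrr ?subr0.
Qed.

Theorem mainTheorem17 (B : nat -> rat) (HB : is_bernoulli B) (n : nat) :
  bell1 n =
  \sum_(k < n.+1) ('C(n, k))%:R * ((bell k.+1)%:R * B (n - k)%N / (k.+1)%:R).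
Proof.
have -> : bell1 n = (n`!)%:R * bell1_gf n by [].
rewrite (bell1_gf_bernoulli HB) mulr_sumr; apply: eq_bigr => -[k /= kn] _.
rewrite bell_exp_expm1 /egf -(bin_fact (kn : (k <= n)%N)) factS !natrM.
by field; rewrite nat1r !pnatr_eq0 -!lt0n fact_gt0.
Qed.
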